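(* Let $n\ge 2$ and let $D$ be any $n$-qubit $\textsc{CZ}$-layer. Let $R$ denote the complete qubit reversal $|x_1x_2\cdots x_n\rangle\mapsto|x_nx_{n-1}\cdots x_1\rangle$. Then the unitary $R\,D$ (a $\textsc{CZ}$-layer followed by qubit reversal; denoted $\widehat{\text{-CZ-}}$) can be implemented by a circuit over the gate library $\{\textsc{P},\textsc{P}^\dagger,\textsc{Z},\textsc{CNOT}\}$ in which every $\textsc{CNOT}$ acts on two adjacent qubits of the line $1,2,\dots,n$ (linear nearest neighbour architecture) and whose $\textsc{CNOT}$ depth (two-qubit depth) is at most $2n+2$.
   Context: $\textsc{P}=\mathrm{diag}(1,i)$, $\textsc{Z}=\textsc{P}^2$, $\textsc{CNOT}|a,b\rangle=|a,a\oplus b\rangle$, $\textsc{CZ}|a,b\rangle=(-1)^{ab}|a,b\rangle$. A $\textsc{CZ}$-layer is any product of $\textsc{CZ}$ gates on pairs of the $n$ qubits. Linear nearest neighbour (LNN) architecture: qubits are arranged on a line and two-qubit gates may only act on qubits $j,j+1$. The two-qubit depth of a circuit is the minimum number of time steps needed to execute its two-qubit gates when each step consists of two-qubit gates on pairwise disjoint qubits (single-qubit gates are not counted). *)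

(* n-qubit operators are represented by their matrix entries
   <y|U|x> over algC, basis states indexed by {ffun 'I_n -> bool}. *)
From HB Require Import structures.
From mathcomp Require Import all_boot all_order all_algebra all_field.
Set Implicit Arguments. Unset Strict Implicit. Unset Printing Implicit Defensive.
Import Order.TTheory GRing.Theory Num.Theory.
Local Open Scope ring_scope.

Section Circuits.
Variable n : nat.

Definition basis := {ffun 'I_n -> bool}.

Definition op := basis -> basis -> algC.

Definition op_id : op := fun y x => (y == x)%:R.

(* opmul A B = A B  (B applied first) *)
Definition opmul (A B : op) : op := fun y x => \sum_(z : basis) A y z * B z x.

Definition diag_op (f : basis -> algC) : op := fun y x => (y == x)%:R * f x.
Definition perm_op (p : basis -> basis) : op := fun y x => (y == p x)%:R.

Inductive sgate := GP | GPdg | GZ.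

Definition sgate_op (g : sgate) (q : 'I_n) : op :=
  diag_op (fun x => if x q then
                      match g with GP => 'i | GPdg => - 'i | GZ => -1 end
                    else 1).

Definition cnot_map (c t : 'I_n) (x : basis) : basis :=
  [ffun k => if k == t then x t (+) x c else x k].
Definition cnot_op (c t : 'I_n) : op := perm_op (cnot_map c t).

Definition cz_op (i j : 'I_n) : op :=
  diag_op (fun x => if x i && x j then -1 else 1).

Definition czlayer_op (D : seq ('I_n * 'I_n)) : op :=
  foldr (fun p acc => opmul (cz_op p.1 p.2) acc) op_id D.

Definition reversal_op : op := perm_op (fun x => [ffun k => x (rev_ord k)]).

(* A circuit of CNOT depth d is a sequence of d layers; each layer is an
   arbitrary sequence of single-qubit gates followed by one time step of
   CNOTs acting on pairwise disjoint qubits; a final sequence of single-qubit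
   gates ends the circuit. *)
Record layer := Layer { singles : seq (sgate * 'I_n); cnots : seq ('I_n * 'I_n) }.

Definition singles_op (s : seq (sgate * 'I_n)) : op :=
  foldl (fun acc g => opmul (sgate_op g.1 g.2) acc) op_id s.
Definition cnots_op (s : seq ('I_n * 'I_n)) : op :=
  foldl (fun acc p => opmul (cnot_op p.1 p.2) acc) op_id s.
Definition layer_op (L : layer) : op :=
  opmul (cnots_op (cnots L)) (singles_op (singles L)).
Definition circuit_op (ls : seq layer) (fin : seq (sgate * 'I_n)) : op :=
  opmul (singles_op fin) (foldl (fun acc L => opmul (layer_op L) acc) op_id ls).

Definition lnn_pair (p : 'I_n * 'I_n) : bool :=
  (p.1.+1 == p.2 :> nat) || (p.2.+1 == p.1 :> nat).

Definition layer_ok (L : layer) : bool :=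
  all lnn_pair (cnots L) && uniq (flatten [seq [:: p.1; p.2] | p <- cnots L]).

End Circuits.

(* Write u_a for the parity x_0 (+) ... (+) x_(a-1) of the first a input bits,
   0 <= a <= n.  Place the labels 0..n on the positions 0..n of a line; the state
   whose wire w carries u_(label w) (+) u_(label (w+1)) is a basis state, equal to x
   for the identity arrangement and to R x for the reversed one.  Two time steps of
   nearest-neighbour CNOTs exchange the labels at p and p+1 for all p of one parity,
   so n+1 rounds of odd-even transposition sort, i.e. 2n+2 CNOT layers, turn x into
   R x.  During the sort any two labels a < b become adjacent, so some wire carries
   the interval parity x_a (+) ... (+) x_(b-1) at that moment and a phase gate P or
   P^dagger can be applied to it; (-1)^(x_i x_j) is a product of four such phases,
   on the intervals [i, j], [i+1, j], [i, j-1] and [i+1, j-1]. *)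

From HB Require Import structures.
From mathcomp Require Import all_boot all_order all_algebra all_field.
From mathcomp Require Import zify.
From Stdlib Require Import FunctionalExtensionality.
Import Order.TTheory GRing.Theory Num.Theory.

Ltac case_ifs :=
  repeat match goal with H : context [if _ then _ else _] |- _ => revert H end;
  repeat match goal with |- context [if ?b then _ else _] =>
    lazymatch b with context [if _ then _ else _] => fail | _ =>
      let H := fresh "H" in case H : b end end;
  intros.

Section OddEvenTransposition.
Variable m : nat.
Local Notation period := (2 * m.+1).

Definition oe_swap (t p : nat) : nat :=
  if p %% 2 == t %% 2 then (if p < m then p.+1 else p) else (if 0 < p then p.-1 else p).

(* Closed form of odd-even transposition sort on the positions 0..m started from
   the identity, round t exchanging the labels at p and p+1 whenever p = t mod 2
   ([label_atS]).  On the cycle of length 2(m+1) unfolding the line, every label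
   advances one step per round, and [unfold_line t p] is the cycle point of
   position p after t rounds. *)
Definition fold_line (c : nat) : nat := if c < m.+1 then c else period.-1 - c.
Definition unfold_line (t p : nat) : nat :=
  if p %% 2 == t %% 2 then p else period.-1 - p.
Definition cycle_add (c t : nat) : nat :=
  if c + t < period then c + t else c + t - period.
Definition cycle_sub (c t : nat) : nat :=
  if t <= c then c - t else c + period - t.
Definition cycle_succ (c : nat) : nat := if c == period.-1 then 0 else c.+1.
Definition label_at (t p : nat) : nat := fold_line (cycle_sub (unfold_line t p) t).
Definition position_of (t a : nat) : nat := fold_line (cycle_add (unfold_line 0 a) t).

(* The round at which the cycle points of a and b are symmetric around the fold,
   so that a and b sit next to each other. *)
Definition meeting_time (a b : nat) : nat :=
  let s := (unfold_line 0 a + unfold_line 0 b) %/ 2 in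
  if s <= m then m - s else period.-1 - s.

Ltac oe_arith :=
  rewrite /label_at /position_of /fold_line /unfold_line /cycle_add /cycle_sub /oe_swap;
  case_ifs; lia.

Lemma label_at0 p : p <= m -> label_at 0 p = p.
Proof. move=> ?; oe_arith. Qed.

Lemma label_at_last p : p <= m -> label_at m.+1 p = m - p.
Proof. move=> ?; oe_arith. Qed.

Lemma unfold_line_lt t p : p <= m -> unfold_line t p < period.
Proof. move=> ?; oe_arith. Qed.

Lemma oe_swap_le t p : p <= m -> oe_swap t p <= m.
Proof. move=> ?; oe_arith. Qed.

Lemma unfold_lineS t p : p <= m ->
  unfold_line t.+1 p = cycle_succ (unfold_line t (oe_swap t p)).
Proof. move=> ?; rewrite /cycle_succ; oe_arith. Qed.

Lemma cycle_sub_succ c t : c < period -> t <= m ->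
  cycle_sub (cycle_succ c) t.+1 = cycle_sub c t.
Proof. move=> ? ?; rewrite /cycle_sub /cycle_succ; case_ifs; lia. Qed.

Lemma label_atS t p : t <= m -> p <= m -> label_at t.+1 p = label_at t (oe_swap t p).
Proof.
move=> ht hp; rewrite /label_at unfold_lineS // cycle_sub_succ //.
exact/unfold_line_lt/oe_swap_le.
Qed.

Lemma label_at_position t a : t <= m.+1 -> a <= m -> label_at t (position_of t a) = a.
Proof. move=> ? ?; oe_arith. Qed.

Definition adjacent_at (t p a b : nat) : bool :=
  (label_at t p == a) && (label_at t p.+1 == b) ||
  (label_at t p == b) && (label_at t p.+1 == a).

Lemma meeting_timeP a b : a < b <= m ->
  let t := meeting_time a b in
  t <= m /\
  ((position_of t a).+1 = position_of t b /\ position_of t a < m \/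
   (position_of t b).+1 = position_of t a /\ position_of t b < m).
Proof.
move=> ?.
have [ea|ea] : a %% 2 = 0 \/ a %% 2 = 1 by lia.
all: have [eb|eb] : b %% 2 = 0 \/ b %% 2 = 1 by lia.
all: rewrite /meeting_time /position_of /fold_line /cycle_add /unfold_line ea eb /=.
all: case_ifs; lia.
Qed.

Lemma labels_meet a b : a < b <= m ->
  exists2 t, t <= m & exists2 p, p < m & adjacent_at t p a b.
Proof.
move=> hab; have [ht hpos] := meeting_timeP _ _ hab.
have ha : a <= m by lia.
have hb : b <= m by lia.
exists (meeting_time a b) => //.
case: hpos => [[hab' hp] | [hba hp]].
- exists (position_of (meeting_time a b) a) => //.
  by rewrite /adjacent_at hab' !label_at_position ?eqxx //; lia.
- exists (position_of (meeting_time a b) b) => //.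
  by rewrite /adjacent_at hba !label_at_position ?eqxx ?orbT //; lia.
Qed.

Lemma oe_swap_adjacent k w : w < m ->
  (w %% 2 == k %% 2 /\ oe_swap k w = w.+1 /\ oe_swap k w.+1 = w) \/
  (w %% 2 != k %% 2 /\ oe_swap k w = (if 0 < w then w.-1 else w) /\
     oe_swap k w.+1 = (if w.+1 < m then w.+2 else w.+1)).
Proof. move=> ?; rewrite /oe_swap; case_ifs; lia. Qed.

End OddEvenTransposition.

Section CircuitSemantics.
Context {n : nat}.
Local Open Scope ring_scope.

Definition monomial_op (f : basis n -> basis n) (c : basis n -> algC) : op n :=
  fun y x => (y == f x)%:R * c x.

Lemma opmul_monomial f c g d :
  opmul (monomial_op f c) (monomial_op g d) =
  monomial_op (f \o g) (fun x => c (g x) * d x).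
Proof.
apply: functional_extensionality => y; apply: functional_extensionality => x.
rewrite /opmul /monomial_op (bigD1 (g x)) //= eqxx mul1r big1 ?addr0 ?mulrA //.
by move=> z /negbTE ->; rewrite mul0r mulr0.
Qed.

Lemma perm_op_monomial p : perm_op p = monomial_op p (fun _ => 1).
Proof. by do 2![apply: functional_extensionality => ?]; rewrite /monomial_op mulr1. Qed.

Lemma op_id_monomial : @op_id n = monomial_op id (fun _ => 1).
Proof. exact: perm_op_monomial. Qed.

Lemma diag_op_monomial f : diag_op f = monomial_op id f.
Proof. by []. Qed.

Definition phase_on (b : bool) (g : sgate) : algC :=
  if b then match g with GP => 'i | GPdg => - 'i | GZ => -1 end else 1.

Definition singles_phase (s : seq (sgate * 'I_n)) (x : basis n) : algC :=
  \prod_(g <- s) phase_on (x g.2) g.1.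

Lemma singles_op_monomial s : singles_op s = monomial_op id (singles_phase s).
Proof.
rewrite /singles_op op_id_monomial.
suff -> : forall c, foldl (fun acc g => opmul (sgate_op g.1 g.2) acc) (monomial_op id c) s =
                     monomial_op id (fun x => singles_phase s x * c x).
  by congr monomial_op; apply: functional_extensionality => x; rewrite mulr1.
elim: s => [|g s IH] c /=.
  congr monomial_op; apply: functional_extensionality => x.
  by rewrite /singles_phase big_nil mul1r.
rewrite /sgate_op diag_op_monomial opmul_monomial IH; congr monomial_op.
apply: functional_extensionality => x.
by rewrite /singles_phase big_cons mulrA [phase_on _ _ * _]mulrC; case: (x g.2).
Qed.

Definition cnots_map (l : seq ('I_n * 'I_n)) : basis n -> basis n :=
  foldl (fun F p => cnot_map p.1 p.2 \o F) id l.

Lemma cnots_op_monomial l : cnots_op l = monomial_op (cnots_map l) (fun _ => 1).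
Proof.
rewrite /cnots_op op_id_monomial /cnots_map.
elim: l (@id (basis n)) => [|p l IH] F //=.
rewrite /cnot_op perm_op_monomial opmul_monomial -IH; congr (foldl _ (monomial_op _ _) _).
by apply: functional_extensionality => x; rewrite mulr1.
Qed.

Definition run_layer (fc : (basis n -> basis n) * (basis n -> algC)) (L : layer n) :=
  (cnots_map (cnots L) \o fc.1, fun x => singles_phase (singles L) (fc.1 x) * fc.2 x).

Definition run_circuit (ls : seq (layer n)) := foldl run_layer (id, fun _ => 1) ls.

Lemma circuit_op_monomial ls fin :
  circuit_op ls fin = monomial_op (run_circuit ls).1
    (fun x => singles_phase fin ((run_circuit ls).1 x) * (run_circuit ls).2 x).
Proof.
have run : forall fc,
    foldl (fun acc L => opmul (layer_op L) acc) (monomial_op fc.1 fc.2) ls =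
    monomial_op (foldl run_layer fc ls).1 (foldl run_layer fc ls).2.
  elim: ls => [|L ls IH] [f c] //=.
  rewrite /layer_op cnots_op_monomial singles_op_monomial !opmul_monomial -IH.
  congr (foldl _ (monomial_op _ _) _).
  by apply: functional_extensionality => x; rewrite mul1r.
by rewrite /circuit_op singles_op_monomial op_id_monomial (run (id, fun _ => 1))
           opmul_monomial.
Qed.

Definition czlayer_phase (D : seq ('I_n * 'I_n)) (x : basis n) : algC :=
  \prod_(p <- D) (if x p.1 && x p.2 then -1 else 1).

Definition reversal_map (x : basis n) : basis n := [ffun k => x (rev_ord k)].

Lemma czlayer_op_monomial D : czlayer_op D = monomial_op id (czlayer_phase D).
Proof.
elim: D => [|p D IH].
  rewrite /czlayer_op /= op_id_monomial; congr monomial_op.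
  by apply: functional_extensionality => x; rewrite /czlayer_phase big_nil.
rewrite /czlayer_op /= -/(czlayer_op D) IH /cz_op diag_op_monomial opmul_monomial.
congr monomial_op; apply: functional_extensionality => x.
by rewrite /czlayer_phase big_cons.
Qed.

Lemma reversal_czlayer_monomial D :
  opmul (reversal_op (n:=n)) (czlayer_op D) = monomial_op reversal_map (czlayer_phase D).
Proof.
rewrite /reversal_op perm_op_monomial czlayer_op_monomial opmul_monomial.
by congr monomial_op; apply: functional_extensionality => x; rewrite mul1r.
Qed.

Lemma cnots_map_xor (l : seq ('I_n * 'I_n)) x :
  {in l &, forall p p', p.1 != p'.2} ->
  cnots_map l x = [ffun w => x w (+) \big[addb/false]_(p <- l | p.2 == w) x p.1].
Proof.
elim/last_ind: l => [|l p IH] hl.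
  by apply/ffunP => w; rewrite ffunE big_nil addbF.
have hl' : {in l &, forall q q', q.1 != q'.2}.
  by move=> q q' hq hq'; apply: hl; rewrite mem_rcons inE ?hq ?hq' orbT.
rewrite /cnots_map foldl_rcons -/(cnots_map l) /= IH //.
have no_control_target : \big[addb/false]_(q <- l | q.2 == p.1) x q.1 = false.
  rewrite big_seq_cond big1 // => q /andP [hq /eqP hq2].
  have := hl p q; rewrite mem_rcons mem_head mem_rcons inE hq orbT => /(_ isT isT).
  by rewrite hq2 eqxx.
apply/ffunP => w; rewrite !ffunE big_rcons /=.
case: (eqVneq w p.2) => [->|_]; last by rewrite addbF.
by rewrite no_control_target addbF addbA.
Qed.

End CircuitSemantics.

Lemma big_pred1_uniq (R : Type) (idx : R) (op : Monoid.law idx) (T : eqType)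
    (r : seq T) (c : T) (F : T -> R) :
  uniq r -> \big[op/idx]_(j <- r | j == c) F j = if c \in r then F c else idx.
Proof.
elim: r => [|a r IH] /=; first by rewrite big_nil.
case/andP=> ar ur; rewrite big_cons IH // inE.
have [<-|//] := eqVneq a c.
by rewrite (negbTE ar) Monoid.mulm1.
Qed.

Lemma uniq_flatten_pairs (T : eqType) (s : seq nat) (f g : nat -> T) (d : T -> nat) :
  uniq s -> {in s, forall j, [/\ d (f j) = j, d (g j) = j & f j != g j]} ->
  uniq (flatten [seq [:: f j; g j] | j <- s]).
Proof.
elim: s => [|a s IH] //= /andP [ha us] hs.
have hs' : {in s, forall j, [/\ d (f j) = j, d (g j) = j & f j != g j]}.
  by move=> j hj; apply: hs; rewrite inE hj orbT.
have d_mem z : z \in flatten [seq [:: f j; g j] | j <- s] -> d z \in s.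
  case/flatten_mapP => j hj; have [df dg _] := hs' j hj.
  by rewrite !inE => /orP [] /eqP ->; rewrite ?df ?dg.
have [da db ne] := hs a (mem_head _ _).
rewrite /= inE negb_or ne IH // andbT.
by apply/andP; split; apply/negP => /d_mem; rewrite ?da ?db (negbTE ha).
Qed.

Section NeighbourCnots.
Variable N : nat.
Local Notation n := N.+1.

Definition left_cnots (k : nat) : seq ('I_n * 'I_n) :=
  [seq (inord j, inord j.-1) | j <- iota 0 n & (j %% 2 == k %% 2) && (0 < j)].
Definition right_cnots (k : nat) : seq ('I_n * 'I_n) :=
  [seq (inord j, inord j.+1) | j <- iota 0 n & (j %% 2 == k %% 2) && (j.+1 < n)].

Lemma inord_eq i (w : 'I_n) : i < n -> (inord i == w) = (i == w).
Proof. by move=> hi; rewrite -(inj_eq val_inj) /= inordK. Qed.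

Lemma left_cnots_xor k (x : basis n) (w : 'I_n) :
  \big[addb/false]_(p <- left_cnots k | p.2 == w) x p.1 =
  [&& w.+1 < n, w.+1 %% 2 == k %% 2 & x (inord w.+1)].
Proof.
rewrite big_map big_filter_cond big_seq_cond.
rewrite (eq_bigl (fun j => (j == w.+1) && ((w.+1 < n) && (w.+1 %% 2 == k %% 2)))); last first.
  move=> j; rewrite mem_iota add0n /=.
  case hj: (j < n) => /=; last lia.
  rewrite inord_eq; lia.
case C: ((w.+1 < n) && (w.+1 %% 2 == k %% 2)).
  2: by rewrite big1 ?andbA ?C // => j; rewrite andbF.
under eq_bigl do rewrite andbT.
by rewrite big_pred1_uniq ?iota_uniq // mem_iota; case/andP: C => -> ->.
Qed.

Lemma right_cnots_xor k (x : basis n) (w : 'I_n) :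
  \big[addb/false]_(p <- right_cnots k | p.2 == w) x p.1 =
  [&& 0 < w, w.-1 %% 2 == k %% 2 & x (inord w.-1)].
Proof.
have hw := ltn_ord w.
rewrite big_map big_filter_cond big_seq_cond.
rewrite (eq_bigl (fun j => (j == w.-1) && ((0 < w) && (w.-1 %% 2 == k %% 2)))); last first.
  move=> j; rewrite mem_iota add0n /=.
  case hj: (j.+1 < n); last by rewrite andbF andFb; lia.
  rewrite inord_eq //; lia.
case C: ((0 < w) && (w.-1 %% 2 == k %% 2)).
  2: by rewrite big1 ?andbA ?C // => j; rewrite andbF.
under eq_bigl do rewrite andbT.
rewrite big_pred1_uniq ?iota_uniq // mem_iota; case/andP: C => -> ->.
by rewrite (_ : w.-1 < n) //; lia.
Qed.

Lemma left_cnots_disjoint k : {in left_cnots k &, forall p p', p.1 != p'.2}.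
Proof.
move=> p p' /mapP [j]; rewrite mem_filter mem_iota => /andP [/andP [h1 h2] h3] ->.
move=> /mapP [j']; rewrite mem_filter mem_iota => /andP [/andP [h1' h2'] h3'] -> /=.
rewrite -(inj_eq val_inj) /= !inordK; lia.
Qed.

Lemma right_cnots_disjoint k : {in right_cnots k &, forall p p', p.1 != p'.2}.
Proof.
move=> p p' /mapP [j]; rewrite mem_filter mem_iota => /andP [/andP [h1 h2] h3] ->.
move=> /mapP [j']; rewrite mem_filter mem_iota => /andP [/andP [h1' h2'] h3'] -> /=.
rewrite -(inj_eq val_inj) /= !inordK; lia.
Qed.

Lemma round_mapE k (y : basis n) (w : 'I_n) :
  cnots_map (right_cnots k) (cnots_map (left_cnots k) y) w =
  y w (+) [&& w.+1 < n, w.+1 %% 2 == k %% 2 & y (inord w.+1)]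
      (+) [&& 0 < w, w.-1 %% 2 == k %% 2 & y (inord w.-1)].
Proof.
rewrite cnots_map_xor; last exact: right_cnots_disjoint.
rewrite ffunE right_cnots_xor cnots_map_xor; last exact: left_cnots_disjoint.
rewrite !ffunE left_cnots_xor.
have hw := ltn_ord w.
case h1: (0 < w) => //=; case h2: (w.-1 %% 2 == k %% 2) => //=.
rewrite left_cnots_xor inordK; last lia.
rewrite (_ : (w.-1.+1 %% 2 == k %% 2) = false) ?andbF ?addbF //; lia.
Qed.

Lemma layer_ok_neighbours (P : pred nat) (g d : nat -> nat) (s : seq (sgate * 'I_n)) :
  (forall j, j < n -> P j ->
     [/\ g j < n, (j.+1 == g j) || ((g j).+1 == j), d j = j & d (g j) = j]) ->
  layer_ok (Layer s [seq (inord j, inord (g j)) | j <- iota 0 n & P j]).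
Proof.
move=> hg; set js := [seq j <- iota 0 n | P j].
have {}hg j : j \in js -> [/\ j < n, g j < n, (j.+1 == g j) || ((g j).+1 == j),
                           d j = j & d (g j) = j].
  by rewrite mem_filter mem_iota => /andP [hP hj]; have [] := hg j hj hP.
apply/andP; split.
  apply/allP => p /mapP [j /hg [hj hgj hadj _ _] ->].
  by rewrite /lnn_pair /= !inordK.
rewrite /= -map_comp.
apply: (@uniq_flatten_pairs _ _ (fun j => @inord N j) (fun j => @inord N (g j))
                            (fun z : 'I_n => d z)).
  exact/filter_uniq/iota_uniq.
move=> j /hg [hj hgj hadj dj dgj]; rewrite /= !inordK //; split => //.
by rewrite -(inj_eq val_inj) /= !inordK //; case/orP: hadj => /eqP; lia.
Qed.

Lemma layer_ok_left_cnots k s : layer_ok (Layer s (left_cnots k)).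
Proof.
apply: (@layer_ok_neighbours _ _ (fun z => if z %% 2 == k %% 2 then z else z.+1)).
by move=> j hj /andP [hk hj0]; rewrite /= hk; case_ifs; split; lia.
Qed.

Lemma layer_ok_right_cnots k s : layer_ok (Layer s (right_cnots k)).
Proof.
apply: (@layer_ok_neighbours _ _ (fun z => if z %% 2 == k %% 2 then z else z.-1)).
by move=> j hj /andP [hk hj0]; rewrite /= hk; case_ifs; split; lia.
Qed.

End NeighbourCnots.

Section SortingStates.
Variable N : nat.
Local Notation n := N.+1.

Definition prefix_parity (x : basis n) (a : nat) : bool :=
  \big[addb/false]_(i < n | i < a) x i.

Lemma prefix_parityS x a : a < n ->
  prefix_parity x a.+1 = prefix_parity x a (+) x (inord a).
Proof.
move=> ha; rewrite /prefix_parity (bigD1 (inord a)) /=; last by rewrite inordK.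
rewrite addbC; congr addb; apply: eq_bigl => i.
rewrite -(inj_eq val_inj) /= inordK //; lia.
Qed.

Definition sort_state (k : nat) (x : basis n) : basis n :=
  [ffun w : 'I_n => prefix_parity x (label_at n k w) (+) prefix_parity x (label_at n k w.+1)].

Lemma sort_state0 x : sort_state 0 x = x.
Proof.
apply/ffunP => w; have hw := ltn_ord w; rewrite ffunE !label_at0; try lia.
by rewrite prefix_parityS // addbA addbb inord_val.
Qed.

Lemma sort_state_last x : sort_state n.+1 x = reversal_map x.
Proof.
apply/ffunP => w; have hw := ltn_ord w; rewrite !ffunE !label_at_last; try lia.
rewrite (_ : n - w = (n - w.+1).+1); last lia.
rewrite prefix_parityS; last lia.
rewrite addbC addbA addbb; congr (x _); apply: val_inj; rewrite /= inordK //; lia.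
Qed.

Lemma round_sort_state k x : k <= n ->
  cnots_map (right_cnots N k) (cnots_map (left_cnots N k) (sort_state k x)) =
  sort_state k.+1 x.
Proof.
move=> hk; apply/ffunP => w; rewrite round_mapE !ffunE.
have hw := ltn_ord w.
rewrite !label_atS //; try lia.
case: (oe_swap_adjacent n k _ hw) => [[hP [-> ->]] | [hP [-> ->]]].
  rewrite (_ : (w.+1 %% 2 == k %% 2) = false) ?andbF /=; last lia.
  case h0: (0 < w) => /=; last by rewrite addbF addbF addbC.
  rewrite (_ : (w.-1 %% 2 == k %% 2) = false) /=; last lia.
  by rewrite addbF addbF addbC.
rewrite (_ : (w.+1 %% 2 == k %% 2) = true) /=; last lia.
have hS : w.+1 < n -> @inord N w.+1 = w.+1 :> nat by move=> ?; rewrite inordK.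
have hpred : 0 < w ->
    (@inord N w.-1 = w.-1 :> nat) * (w.-1.+1 = w) * (w.-1 %% 2 == k %% 2).
  move=> ?; rewrite inordK; last lia.
  by split; [split|]; lia.
case h0: (0 < w) => /=; first rewrite !hpred //=.
all: case hn: (w.+1 < n) => /=; rewrite ?hS //.
all: move: (prefix_parity x) (label_at n k) => P l.
all: by move: (P (l w.-1)) (P (l w)) (P (l w.+1)) (P (l w.+2)); do 4!case.
Qed.

End SortingStates.

Local Open Scope ring_scope.

Lemma sgate_comparable : comparable sgate.
Proof. by rewrite /comparable /decidable; decide equality. Qed.

HB.instance Definition _ := comparableMixin sgate_comparable.

Lemma cz_phase_from_parities s a b :
  phase_on (s (+) a (+) b) GPdg * (phase_on (s (+) b) GP *
    (phase_on (s (+) a) GP * phase_on s GPdg)) = if a && b then -1 else 1.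
Proof.
have i2 : 'i * 'i = -1 :> algC by rewrite -expr2 sqrCi.
by case: s; case: a; case: b; rewrite /phase_on /= ?(mulr1, mul1r, mulNr, mulrN, i2, opprK).
Qed.

Section Construction.
Variable N : nat.
Local Notation n := N.+1.
Variable D : seq ('I_n * 'I_n).

(* (a, b, g) asks for the gate g on a wire carrying u_a (+) u_b, the parity of the
   input bits a..b-1; the interval [lo+1, hi-1] is empty when hi = lo + 1. *)
Definition parity_items (p : 'I_n * 'I_n) : seq (nat * nat * sgate) :=
  let lo := minn p.1 p.2 in let hi := maxn p.1 p.2 in
  [:: (lo, hi.+1, GPdg); (lo.+1, hi.+1, GP); (lo, hi, GP)] ++
  (if (lo.+1 < hi)%N then [:: (lo.+1, hi, GPdg)] else [::]).

Definition cz_items : seq (nat * nat * sgate) := flatten [seq parity_items p | p <- D].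

Definition parity_slot (it : nat * nat * sgate) : 'I_n.+1 * 'I_n :=
  odflt (ord0, ord0) [pick tw : 'I_n.+1 * 'I_n | adjacent_at n tw.1 tw.2 it.1.1 it.1.2].

Definition round_singles (t : nat) : seq (sgate * 'I_n) :=
  [seq (it.2, (parity_slot it).2) | it <- cz_items & (parity_slot it).1 == t :> nat].

Definition round_layers (t : nat) : seq (layer n) :=
  [:: Layer (round_singles t) (left_cnots N t); Layer [::] (right_cnots N t)].

Definition construction (k : nat) : seq (layer n) :=
  flatten [seq round_layers t | t <- iota 0 k].

Lemma constructionS k : construction k.+1 = construction k ++ round_layers k.
Proof.
rewrite /construction (_ : iota 0 k.+1 = iota 0 k ++ [:: k]); last by rewrite -addn1 iotaD.
by rewrite map_cat flatten_cat /= ?cats0.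
Qed.

Lemma size_construction k : size (construction k) = (2 * k)%N.
Proof. by elim: k => [|k IH] //; rewrite constructionS size_cat IH /=; lia. Qed.

Lemma layer_ok_construction k : all (@layer_ok n) (construction k).
Proof.
elim: k => [|k IH] //.
by rewrite constructionS all_cat IH /= layer_ok_left_cnots layer_ok_right_cnots.
Qed.

Lemma run_construction k x : (k <= n.+1)%N ->
  (run_circuit (construction k)).1 x = sort_state N k x /\
  (run_circuit (construction k)).2 x =
    \prod_(t < k) singles_phase (round_singles t) (sort_state N t x).
Proof.
elim: k => [|k IH] hk; first by rewrite /= sort_state0 big_ord0.
have [IH1 IH2] := IH (ltnW hk).
rewrite /run_circuit constructionS foldl_cat -/(run_circuit _) /= /run_layer /=.
rewrite IH1 IH2 round_sort_state //; split => //.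
by rewrite big_ord_recr /= /singles_phase big_nil mul1r mulrC.
Qed.

Hypothesis hD : all (fun p => p.1 != p.2) D.

Lemma cz_items_valid it : it \in cz_items -> (it.1.1 < it.1.2 <= n)%N.
Proof.
case/flatten_mapP => -[i j] /(allP hD) /= hij.
have h1 := ltn_ord i; have h2 := ltn_ord j.
have {}hij : nat_of_ord i != nat_of_ord j by [].
rewrite /parity_items mem_cat !inE => /orP [/or3P [] /eqP -> | ] /=; try lia.
by case: ifP => // hlt; rewrite inE => /eqP -> /=; lia.
Qed.

Lemma parity_slotP it : (it.1.1 < it.1.2 <= n)%N ->
  adjacent_at n (parity_slot it).1 (parity_slot it).2 it.1.1 it.1.2.
Proof.
move=> hab; rewrite /parity_slot; case: pickP => [tw //|none].
have [t ht [p hp adj]] := labels_meet _ _ _ hab.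
by have := none (Ordinal (ht : (t < n.+1)%N), Ordinal hp); rewrite /= adj.
Qed.

Lemma parity_slot_phase it x : (it.1.1 < it.1.2 <= n)%N ->
  phase_on (sort_state N (parity_slot it).1 x (parity_slot it).2) it.2 =
  phase_on (prefix_parity N x it.1.1 (+) prefix_parity N x it.1.2) it.2.
Proof.
move=> /parity_slotP; rewrite ffunE.
by case/orP => /andP [/eqP -> /eqP ->]; rewrite // addbC.
Qed.

Lemma parity_items_phase p x : p.1 != p.2 ->
  \prod_(it <- parity_items p)
     phase_on (prefix_parity N x it.1.1 (+) prefix_parity N x it.1.2) it.2 =
  if x p.1 && x p.2 then -1 else 1.
Proof.
case: p => i j /= hij; have {}hij : nat_of_ord i != nat_of_ord j by [].
have h1 := ltn_ord i; have h2 := ltn_ord j.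
rewrite /parity_items big_cat /= !big_cons big_nil !mulr1.
set lo := minn i j; set hi := maxn i j.
have hlo : (lo < n)%N by lia.
have hhi : (hi < n)%N by lia.
have -> : x i && x j = x (inord lo) && x (inord hi).
  by rewrite /lo /hi /minn /maxn; case: ltnP => _; rewrite !inord_val // andbC.
rewrite !prefix_parityS //.
case: ifP => [_ | hlohi].
  rewrite big_cons big_nil mulr1 prefix_parityS //= -!mulrA.
  rewrite -[RHS](cz_phase_from_parities
                   (prefix_parity N x lo (+) x (inord lo) (+) prefix_parity N x hi)).
  move: (prefix_parity N x lo) (prefix_parity N x hi) (x (inord lo)) (x (inord hi)).
  by do 4!case.
have ehi : hi = lo.+1 by lia.
rewrite ehi prefix_parityS // big_nil mulr1 -[RHS](cz_phase_from_parities false).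
rewrite [phase_on false GPdg]/phase_on mulr1.
by move: (prefix_parity N x lo) (x (inord lo)) (x (inord lo.+1)); do 3!case.
Qed.

Lemma construction_phase x :
  \prod_(t < n.+1) singles_phase (round_singles t) (sort_state N t x) = czlayer_phase D x.
Proof.
under eq_bigr do rewrite /singles_phase /round_singles big_map big_filter.
rewrite (exchange_big_dep xpredT) //= big_seq.
under eq_bigr => it hit.
  rewrite (big_pred1 (parity_slot it).1) /=; last first.
    by move=> t; rewrite /= eq_sym (inj_eq val_inj).
  rewrite parity_slot_phase; last exact: cz_items_valid.
  over.
rewrite -big_seq big_flatten big_map /czlayer_phase big_seq [RHS]big_seq.
by apply: eq_bigr => p hp; apply/parity_items_phase/(allP hD).
Qed.

End Construction.

Theorem theorem2 (n : nat) (hn : (2 <= n)%N) (D : seq ('I_n * 'I_n))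
    (hD : all (fun p => p.1 != p.2) D) :
  exists (ls : seq (layer n)) (fin : seq (sgate * 'I_n)),
    [/\ (size ls <= 2 * n + 2)%N, all (@layer_ok n) ls &
        forall y x : basis n,
          circuit_op ls fin y x = opmul (reversal_op (n:=n)) (czlayer_op D) y x].
Proof.
case: n hn D hD => [|N] // _ D hD.
exists (construction N D N.+2), [::]; split.
- by rewrite size_construction; lia.
- exact: layer_ok_construction.
- move=> y x; rewrite circuit_op_monomial reversal_czlayer_monomial /monomial_op.
  have [-> ->] := run_construction N D N.+2 x (leqnn _).
  by rewrite sort_state_last construction_phase // /singles_phase big_nil mul1r.
Qed.
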